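(* Let $n\ge 2$. For every triangulation $T$ of the cyclic polytope $C(n+2,3)$, the graph $\Gamma(T) := ([n], F_1(T)\cap \binom{[n]}{2})$ is a persistent graph on $n$ vertices.
   Context: The cyclic polytope $C(n+2,3)$ is the convex hull of $n+2$ points on the moment curve $t\mapsto(t,t^2,t^3)$, with vertices labelled $0,1,\dots,n+1$ in increasing order of the parameter; faces are identified with their vertex sets. A triangulation of $C(n+2,3)$ is a set $T$ of 3-simplices (4-element subsets of $\{0,\dots,n+1\}$) such that the union of their convex hulls is the polytope and any two of them intersect in a common (possibly empty) face. $F_1(T)$ is the set of 2-element subsets contained in some simplex of $T$; thus $i,j\in[n]$ are adjacent in $\Gamma(T)$ iff $\{i,j\}\subseteq S$ for some $S\in T$. A graph $G=([n],E)$ is persistent if (1) $\{i,i+1\}\in E$ for all $1\le i<n$; (2) (X-property) if $\{a,c\},\{b,d\}\in E$ for $a<b<c<d$ then $\{a,d\}\in E$; (3) (bar-property) for every edge $\{a,b\}\in E$ with $a<b-1$ there is $x$ with $a<x<b$ and $\{a,x\},\{x,b\}\in E$. *)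

From HB Require Import structures.
From mathcomp Require Import all_boot all_order all_algebra.
From mathcomp Require Import reals.
Set Implicit Arguments. Unset Strict Implicit. Unset Printing Implicit Defensive.
Import Order.TTheory GRing.Theory Num.Theory.
Local Open Scope ring_scope.

Definition pt (R : realType) := 'I_3 -> R.

Definition moment_pt (R : realType) (N : nat) (t : 'I_N -> R) (i : 'I_N) : pt R :=
  fun k => t i ^+ (val k).+1.

Definition conv (R : realType) (N : nat) (p : 'I_N -> pt R) (S : {set 'I_N})
  (x : pt R) : Prop :=
  exists w : 'I_N -> R,
    [/\ forall i, 0 <= w i,
        forall i, i \notin S -> w i = 0,
        \sum_(i < N) w i = 1
      & forall k, x k = \sum_(i < N) w i * p i k].

Definition dot (R : realType) (a x : pt R) : R := \sum_(k < 3) a k * x k.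

(* F is a face of the convex set P: F = P \cap H for some hyperplane
   H = {a.x = b} with P contained in {a.x <= b} (a = 0 allowed, giving P and
   the empty face). *)
Definition is_face (R : realType) (P F : pt R -> Prop) : Prop :=
  exists (a : pt R) (b : R),
    (forall x, P x -> dot a x <= b) /\
    (forall x, F x <-> (P x /\ dot a x = b)).

Definition triangulation (R : realType) (N : nat) (t : 'I_N -> R)
  (T : {set {set 'I_N}}) : Prop :=
  let p := moment_pt t in
  [/\ forall S, S \in T -> #|S| = 4%N,
      (forall x, conv p [set: 'I_N] x <-> exists2 S, S \in T & conv p S x)
    & forall S1 S2, S1 \in T -> S2 \in T ->
        is_face (conv p S1) (fun x => conv p S1 x /\ conv p S2 x) /\
        is_face (conv p S2) (fun x => conv p S1 x /\ conv p S2 x)].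

(* The graph Gamma(T) on [n] = {1,...,n}, for T a triangulation of C(n+2,3)
   (vertices labelled 0..n+1): adjacency of i, j. *)
Definition Gamma (n : nat) (T : {set {set 'I_(n.+2)}}) (i j : nat) : Prop :=
  [/\ (1 <= i <= n)%N, (1 <= j <= n)%N, i <> j &
      exists2 S, S \in T &
        exists (i' j' : 'I_(n.+2)), [/\ val i' = i, val j' = j, i' \in S & j' \in S]].

Definition persistent (n : nat) (adj : nat -> nat -> Prop) : Prop :=
  [/\ (forall i, (1 <= i)%N -> (i < n)%N -> adj i i.+1),
      (forall a b c d, (1 <= a)%N -> (a < b)%N -> (b < c)%N -> (c < d)%N ->
         (d <= n)%N -> adj a c -> adj b d -> adj a d)
    & (forall a b, (1 <= a)%N -> (a.+1 < b)%N -> (b <= n)%N -> adj a b ->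
         exists x, [/\ (a < x)%N, (x < b)%N, adj a x & adj x b])].

(* For a polynomial f of degree at most 3, [horner_pt f] is an affine functional
   on R^3 taking the value f (t_i) at the i-th point p_i of the moment curve.  So if
   x = sum_i w_i p_i is a convex combination, then horner_pt f x = sum_i w_i f (t_i),
   and the sign pattern of f on the t_i controls which vertices can carry weight.

   Consecutive vertices and the X-property: some simplex contains the midpoint of
   [p_a, p_d].  Testing it against (u - t_a)(u - t_d), (u - t_a)^2 (u - t_d) and
   (u - t_a)(u - t_d)^2 shows that the simplex either contains a and d, or has
   vertices x < a < y < d < z.  In the second case the Radon relation between five
   points of the moment curve puts an interior point of the edge [p_a, p_c] (or
   [p_b, p_d]) inside that simplex.  Two simplices of a triangulation meet in a
   common face, so this forces five vertices into one simplex.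

   Bar property: push the midpoint of the edge [p_a, p_b] slightly towards p_(a+1).
   Simplices are closed, so for small enough pushes only simplices containing a and
   b contain the pushed point.  There (u - t_a)(u - t_b) is negative, so some weight
   sits on a vertex strictly between a and b. *)

From mathcomp Require Import all_boot all_order all_algebra.
From mathcomp Require Import reals.
From mathcomp Require Import ring lra zify.
From Stdlib Require Import Classical.
Set Implicit Arguments. Unset Strict Implicit. Unset Printing Implicit Defensive.
Import Order.TTheory GRing.Theory Num.Theory.
Local Open Scope ring_scope.

Lemma sum_delta (R : pzSemiRingType) N (i : 'I_N) (F : 'I_N -> R) :
  \sum_m (m == i)%:R * F m = F i.
Proof.
rewrite (bigD1 i) //= eqxx mul1r big1 ?addr0 // => m /negbTE ->.
by rewrite mul0r.
Qed.

Lemma sum_lt0_witness (R : realDomainType) (I : finType) (F : I -> R) :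
  \sum_i F i < 0 -> exists i, F i < 0.
Proof.
move=> neg; apply: NNPP => hF; move: neg; rewrite ltNge sumr_ge0 // => i _.
by rewrite leNgt; apply/negP => Fi; apply: hF; exists i.
Qed.

Lemma sum_neq0_witness (V : nmodType) (I : finType) (F : I -> V) :
  \sum_i F i != 0 -> exists i, F i != 0.
Proof.
move=> nz; apply: NNPP => hF; move: nz; rewrite big1 ?eqxx // => i _.
by apply: NNPP => Fi; apply: hF; exists i; apply/eqP.
Qed.

Lemma prod_sub_root (R : idomainType) (x : R) (r : seq R) :
  x \in r -> \prod_(c <- r) (x - c) = 0.
Proof.
move=> xr; apply/eqP; rewrite prodf_seq_eq0.
by apply/hasP; exists x; rewrite /= ?subrr ?eqxx.
Qed.

Lemma half_gt0_lt1 (R : numFieldType) : 0 < (2^-1 : R) < 1.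
Proof. by rewrite invr_gt0 ltr0n invf_lt1 ?ltr0n ?ltr1n. Qed.

Lemma weighted_sum_eq0_signs (R : realDomainType) (I : finType) (w g : I -> R) y :
  (forall i, 0 <= w i) -> \sum_i w i * g i = 0 -> w y != 0 -> g y != 0 ->
  (exists i, (w i != 0) && (g i < 0)) /\ (exists i, (w i != 0) && (0 < g i)).
Proof.
move=> w0 s0 wy gy.
have opposite (h : I -> R) : \sum_i w i * h i = 0 -> 0 < h y ->
    exists i, (w i != 0) && (h i < 0).
  move=> hs hy; apply: NNPP => none.
  have wh0 i : 0 <= w i * h i.
    case: (eqVneq (w i) 0) => [->|wi]; first by rewrite mul0r.
    by rewrite mulr_ge0 // leNgt; apply: contra_notN none => hi; exists i; rewrite wi.
  have /eqP := @psumr_eq0P _ _ predT _ (fun i _ => wh0 i) hs y isT.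
  by rewrite mulf_eq0 (negbTE wy) (gt_eqF hy).
case: (ltrgtP (g y) 0) => [gneg|gpos|/eqP]; last by rewrite (negbTE gy).
- split; first by exists y; rewrite wy gneg.
  have sN : \sum_i w i * - g i = 0.
    by under eq_bigr do rewrite mulrN; rewrite sumrN s0 oppr0.
  have [i /andP[wi]] := opposite _ sN (ltac:(by rewrite oppr_gt0)).
  by rewrite oppr_lt0 => gi; exists i; rewrite wi.
- by split; [exact: opposite | exists y; rewrite wy gpos].
Qed.

Lemma small_enough_seq (R : realDomainType) (I : eqType) (s : seq I)
    (Q : I -> R -> Prop) :
  (forall i, i \in s -> exists2 d, 0 < d & forall e, 0 < e <= d -> Q i e) ->
  exists2 d, 0 < d & forall i, i \in s -> forall e, 0 < e <= d -> Q i e.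
Proof.
elim: s => [|i s IHs] hs; first by exists 1.
have [d1 d1p Qi] := hs i (mem_head _ _).
have [d2 d2p Qs] := IHs (fun j js => hs j (mem_behead (s := i :: s) js)).
exists (Num.min d1 d2); first by rewrite lt_min d1p d2p.
move=> j; rewrite inE => /predU1P[->|js] e /andP[e0]; rewrite le_min => /andP[e1 e2].
- by apply: Qi; rewrite e0.
- by apply: Qs => //; rewrite e0.
Qed.

Section AffineFunctionals.
Variable R : realType.

Definition lerp (x y : pt R) (e : R) : pt R := fun k => x k + e * (y k - x k).

Lemma dot_lerp (a x y : pt R) e :
  dot a (lerp x y e) = dot a x + e * (dot a y - dot a x).
Proof.
rewrite /dot -sumrB mulr_sumr -big_split /=.
by apply: eq_bigr => k _; rewrite /lerp; ring.
Qed.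

Definition horner_pt (P : {poly R}) (x : pt R) : R :=
  P`_0 + dot (fun k => P`_k.+1) x.

Lemma horner_pt_lerp P x y e :
  horner_pt P (lerp x y e) = horner_pt P x + e * (horner_pt P y - horner_pt P x).
Proof. by rewrite /horner_pt dot_lerp; ring. Qed.

Lemma horner_pt_comb N (p : 'I_N -> pt R) (w : 'I_N -> R) x P :
  \sum_i w i = 1 -> (forall k, x k = \sum_i w i * p i k) ->
  horner_pt P x = \sum_i w i * horner_pt P (p i).
Proof.
move=> w1 wx; rewrite /horner_pt /dot.
under [RHS]eq_bigr do rewrite mulrDr mulr_sumr.
rewrite big_split /= -mulr_suml w1 mul1r exchange_big; congr (_ + _).
by apply: eq_bigr => k _; rewrite wx mulr_sumr; apply: eq_bigr => i _; ring.
Qed.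

Lemma horner_pt_moment N (t : 'I_N -> R) i (P : {poly R}) :
  (size P <= 4)%N -> horner_pt P (moment_pt t i) = P.[t i].
Proof.
move=> hP; rewrite (horner_coef_wide _ hP) /horner_pt /dot /moment_pt.
by rewrite !big_ord_recl big_ord0 /=; ring.
Qed.

Lemma conv3 N (p : 'I_N -> pt R) (S : {set 'I_N}) (i j k : 'I_N) (a b c : R) x :
  i \in S -> j \in S -> k \in S -> 0 <= a -> 0 <= b -> 0 <= c -> a + b + c = 1 ->
  (forall m, x m = a * p i m + b * p j m + c * p k m) -> conv p S x.
Proof.
move=> iS jS kS a0 b0 c0 abc hx.
pose w m := a * (m == i)%:R + b * (m == j)%:R + c * (m == k)%:R.
have sum_w F : \sum_m w m * F m = a * F i + b * F j + c * F k.
  rewrite -!sum_delta !mulr_sumr -!big_split /=.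
  by apply: eq_bigr => m _; rewrite /w; ring.
exists w; split.
- by move=> m; rewrite /w !addr_ge0 // mulr_ge0 // ler0n.
- move=> m mS; rewrite /w.
  have /negbTE-> : m != i by apply: contraNneq mS => ->.
  have /negbTE-> : m != j by apply: contraNneq mS => ->.
  have /negbTE-> : m != k by apply: contraNneq mS => ->.
  by rewrite !mulr0 !addr0.
- by move: (sum_w (fun=> 1)); rewrite !mulr1 abc; under eq_bigr do rewrite mulr1.
- by move=> m; rewrite sum_w hx.
Qed.

Lemma conv_lerp N (p : 'I_N -> pt R) (S : {set 'I_N}) a c e :
  a \in S -> c \in S -> 0 <= e <= 1 -> conv p S (lerp (p a) (p c) e).
Proof.
move=> aS cS /andP[e0 e1]; apply: (conv3 aS cS aS (a := 1 - e) (b := e) (c := 0)) => //.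
- by rewrite subr_ge0.
- by rewrite addr0 subrK.
- by move=> m; rewrite /lerp; ring.
Qed.

End AffineFunctionals.

Definition vdm (R : comRingType) (a b c d : R) : R :=
  (b - a) * (c - a) * (d - a) * (c - b) * (d - b) * (d - c).

Lemma vdm_gt0 (R : numDomainType) (a b c d : R) :
  a < b -> b < c -> c < d -> 0 < vdm a b c d.
Proof.
move=> ab bc cd; have ac := lt_trans ab bc; have bd := lt_trans bc cd.
have ad := lt_trans ac cd.
by rewrite /vdm !mulr_gt0 // subr_gt0.
Qed.

(* Cramer's rule for the affine dependence of five points of the moment curve;
   the five coefficients are positive for x1 < ... < x5. *)
Lemma vdm_radon (R : comRingType) (x1 x2 x3 x4 x5 : R) k : (k <= 3)%N ->
  vdm x1 x3 x4 x5 * x2 ^+ k + vdm x1 x2 x3 x5 * x4 ^+ k =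
  vdm x2 x3 x4 x5 * x1 ^+ k + vdm x1 x2 x4 x5 * x3 ^+ k + vdm x1 x2 x3 x4 * x5 ^+ k.
Proof. by case: k => [|[|[|[|//]]]] _; rewrite /vdm; ring. Qed.

Section MomentCurve.
Variables (R : realType) (N : nat) (t : 'I_N -> R).
Hypothesis t_mono : forall i j : 'I_N, (i < j)%N -> t i < t j.
Local Notation p := (moment_pt t).

Lemma t_lt i j : (t i < t j) = (i < j)%N.
Proof.
apply/idP/idP => [|/t_mono //]; apply: contraTT; rewrite -leqNgt -leNgt.
by rewrite leq_eqVlt => /orP[/eqP/val_inj-> //|/t_mono/ltW].
Qed.

Lemma t_le i j : (t i <= t j) = (i <= j)%N.
Proof. by rewrite leNgt t_lt -leqNgt. Qed.

Lemma t_eq i j : (t i == t j) = (i == j).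
Proof. by rewrite eq_le !t_le -eqn_leq. Qed.

Lemma between_sign (a b k : 'I_N) : (a <= b)%N ->
  ((t k - t a) * (t k - t b) < 0) = (a < k < b)%N.
Proof.
move=> ab; case: (ltnP a k) => ak /=; last first.
  by rewrite ltNge mulr_le0 ?subr_le0 ?t_le // (leq_trans ak).
case: (ltnP k b) => kb.
  by rewrite pmulr_rlt0 ?subr_gt0 ?subr_lt0 ?t_lt.
by rewrite ltNge mulr_ge0 ?subr_ge0 ?t_le // ltnW.
Qed.

Lemma horner_pt_root_poly (r : seq R) i : (size r <= 3)%N ->
  horner_pt (\prod_(c <- r) ('X - c%:P)) (p i) = \prod_(c <- r) (t i - c).
Proof.
move=> hr; rewrite horner_pt_moment ?size_prod_XsubC // horner_prod.
by apply: eq_bigr => c _; rewrite hornerXsubC.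
Qed.

Lemma sum_weights_root_poly (r : seq R) (w : 'I_N -> R) x : (size r <= 3)%N ->
  \sum_i w i = 1 -> (forall k, x k = \sum_i w i * p i k) ->
  \sum_i w i * \prod_(c <- r) (t i - c) = horner_pt (\prod_(c <- r) ('X - c%:P)) x.
Proof.
move=> hr w1 wx; rewrite (horner_pt_comb _ w1 wx).
by apply: eq_bigr => i _; rewrite horner_pt_root_poly.
Qed.

Lemma weight_support (S : {set 'I_N}) (w : 'I_N -> R) i :
  (forall i, i \notin S -> w i = 0) -> w i != 0 -> i \in S.
Proof. by move=> wS; apply: contraR => /wS ->; rewrite eqxx. Qed.

Lemma conv_momentP (S : {set 'I_N}) a : conv p S (p a) <-> a \in S.
Proof.
split => [[w [w0 wS w1 wx]]|aS]; last first.
  apply: (conv3 aS aS aS (a := 1) (b := 0) (c := 0)) => //; first by rewrite !addr0.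
  by move=> m; ring.
have := sum_weights_root_poly (r := [:: t a; t a]) isT w1 wx.
rewrite horner_pt_root_poly // !big_cons big_nil subrr mul0r => sq0.
have wa i : i != a -> w i = 0.
  move=> ia; apply/eqP; apply: contraT => wi.
  have [[j /andP[_ sqj]] _] := weighted_sum_eq0_signs w0 sq0 wi
    (ltac:(by rewrite /= !big_cons big_nil mulr1 mulf_neq0 // subr_eq0 t_eq)).
  by move: sqj; rewrite !big_cons big_nil mulr1 -expr2 ltNge sqr_ge0.
apply: (weight_support wS); move: w1; rewrite (bigD1 a) //= big1 ?addr0 => [->|i /wa //].
exact: oner_neq0.
Qed.

Lemma conv_segment_ends (S : {set 'I_N}) (w : 'I_N -> R) (a d : 'I_N) e :
  a != d -> 0 < e < 1 ->
  (forall i, i \notin S -> w i = 0) -> \sum_i w i = 1 ->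
  (forall k, lerp (p a) (p d) e k = \sum_i w i * p i k) ->
  (forall i, w i != 0 -> i = a \/ i = d) -> a \in S /\ d \in S.
Proof.
move=> ad /andP[e0 e1] wS w1 wx wad.
have hit u v : (forall i, w i != 0 -> i = u \/ i = v) ->
    (t a - t v) + e * ((t d - t v) - (t a - t v)) != 0 -> u \in S.
  move=> wuv nz.
  have : horner_pt (\prod_(c <- [:: t v]) ('X - c%:P)) (lerp (p a) (p d) e) != 0.
    by rewrite horner_pt_lerp !horner_pt_root_poly // !big_seq1.
  rewrite -(sum_weights_root_poly _ w1 wx) // => /sum_neq0_witness[i].
  rewrite big_seq1 mulf_eq0 negb_or subr_eq0 t_eq => /andP[wi iv].
  by case: (wuv i wi) => [<-|ivE]; [exact: weight_support wS wi | rewrite ivE eqxx in iv].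
have tad : t a - t d != 0 by rewrite subr_eq0 t_eq.
split.
- apply: hit wad _ => //.
  rewrite [X in X != 0](_ : _ = (1 - e) * (t a - t d)); last by ring.
  by rewrite mulf_neq0 // subr_eq0 gt_eqF.
- apply: (hit d a); first by move=> i /wad[]; auto.
  rewrite [X in X != 0](_ : _ = - e * (t a - t d)); last by ring.
  by rewrite mulf_neq0 // oppr_eq0 gt_eqF.
Qed.

Lemma conv_midpoint (a b : 'I_N) : conv p [set: 'I_N] (lerp (p a) (p b) 2^-1).
Proof.
have /andP[h0 h1] := half_gt0_lt1 R.
by apply: conv_lerp; rewrite ?inE // (ltW h0) (ltW h1).
Qed.

Lemma sum_weights_roots_eq0 (r : seq R) (w : 'I_N -> R) (a d : 'I_N) e :
  (size r <= 3)%N -> t a \in r -> t d \in r -> \sum_i w i = 1 ->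
  (forall k, lerp (p a) (p d) e k = \sum_i w i * p i k) ->
  \sum_i w i * \prod_(c <- r) (t i - c) = 0.
Proof.
move=> hr ar dr w1 wx; rewrite (sum_weights_root_poly hr w1 wx) horner_pt_lerp.
by rewrite !horner_pt_root_poly // !prod_sub_root // subrr mulr0 addr0.
Qed.

Lemma conv_midpoint_split (S : {set 'I_N}) (a d : 'I_N) : (a < d)%N ->
  conv p S (lerp (p a) (p d) 2^-1) ->
  (a \in S /\ d \in S) \/
  exists x y z : 'I_N, [/\ x \in S, y \in S & z \in S] /\
                       [/\ (x < a)%N, (a < y)%N, (y < d)%N & (d < z)%N].
Proof.
move=> ad [w [w0 wS w1 wx]].
have vanish r : (size r <= 3)%N -> t a \in r -> t d \in r ->
    \sum_i w i * \prod_(c <- r) (t i - c) = 0.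
  by move=> hr ar dr; apply: sum_weights_roots_eq0 wx.
case: (pickP (fun y => (w y != 0) && (a < y < d)%N)) => [y /andP[wy /andP[ay yd]]|none].
  have ya : t y - t a != 0 by rewrite subr_eq0 t_eq -val_eqE /= neq_ltn ay orbT.
  have yd' : t y - t d != 0 by rewrite subr_eq0 t_eq -val_eqE /= neq_ltn yd.
  have s2 : \sum_i w i * \prod_(c <- [:: t a; t a; t d]) (t i - c) = 0.
    by apply: vanish; rewrite ?inE ?eqxx ?orbT.
  have s3 : \sum_i w i * \prod_(c <- [:: t a; t d; t d]) (t i - c) = 0.
    by apply: vanish; rewrite ?inE ?eqxx ?orbT.
  have [_ [z /andP[wz f2z]]] := weighted_sum_eq0_signs w0 s2 wy
    (ltac:(by rewrite /= !big_cons big_nil mulr1 !mulf_neq0)).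
  have [[x /andP[wx' f3x]] _] := weighted_sum_eq0_signs w0 s3 wy
    (ltac:(by rewrite /= !big_cons big_nil mulr1 !mulf_neq0)).
  rewrite !big_cons big_nil mulr1 mulrA -expr2 in f2z.
  rewrite !big_cons big_nil mulr1 -expr2 in f3x.
  right; exists x, y, z; split; first by split; apply: (weight_support wS).
  split => //.
  - rewrite -t_lt -subr_lt0; apply: contraTT f3x; rewrite -!leNgt => ax.
    by rewrite mulr_ge0 ?sqr_ge0.
  - rewrite -t_lt -subr_gt0; apply: contraTT f2z; rewrite -!leNgt => zd.
    by rewrite mulr_ge0_le0 ?sqr_ge0.
left; apply: (conv_segment_ends _ _ wS w1 wx) => [||i wi].
- by rewrite -val_eqE /= neq_ltn ad.
- exact: half_gt0_lt1.
have s1 : \sum_i w i * \prod_(c <- [:: t a; t d]) (t i - c) = 0.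
  by apply: vanish; rewrite ?inE ?eqxx ?orbT.
have : (t i - t a) * (t i - t d) == 0.
  apply: contraT => f1i.
  have [[j /andP[wj f1j]] _] := weighted_sum_eq0_signs w0 s1 wi
    (ltac:(by rewrite /= !big_cons big_nil mulr1)).
  move: f1j; rewrite !big_cons big_nil mulr1 (between_sign _ (ltnW ad)).
  by have := none j; rewrite /= wj /= => ->.
by rewrite mulf_eq0 !subr_eq0 !t_eq => /orP[] /eqP; auto.
Qed.

Lemma conv_interlace (S : {set 'I_N}) (u1 u2 u3 u4 u5 : 'I_N) :
  (u1 < u2)%N -> (u2 < u3)%N -> (u3 < u4)%N -> (u4 < u5)%N ->
  u1 \in S -> u3 \in S -> u5 \in S ->
  exists2 e, 0 < e < 1 & conv p S (lerp (p u2) (p u4) e).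
Proof.
move=> /t_mono t12 /t_mono t23 /t_mono t34 /t_mono t45 h1 h3 h5.
have t13 := lt_trans t12 t23; have t24 := lt_trans t23 t34.
have t35 := lt_trans t34 t45.
have radon := vdm_radon (t u1) (t u2) (t u3) (t u4) (t u5).
set A1 := vdm (t u2) _ _ _ in radon; set A2 := vdm (t u1) (t u3) _ _ in radon.
set A3 := vdm _ _ (t u4) _ in radon; set A4 := vdm _ _ _ (t u5) in radon.
set A5 := vdm _ _ _ _ in radon.
have A1p : 0 < A1 := vdm_gt0 t23 t34 t45.
have A2p : 0 < A2 := vdm_gt0 t13 t34 t45.
have A3p : 0 < A3 := vdm_gt0 t12 t24 t45.
have A4p : 0 < A4 := vdm_gt0 t12 t23 t35.
have A5p : 0 < A5 := vdm_gt0 t12 t23 t34.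
have Ap : 0 < A2 + A4 by rewrite addr_gt0.
have Anz : A2 + A4 != 0 by rewrite gt_eqF.
exists (A4 / (A2 + A4)).
  by rewrite divr_gt0 //= ltr_pdivrMr // mul1r ltrDr.
apply: (conv3 h1 h3 h5 (a := A1 / (A2 + A4)) (b := A3 / (A2 + A4)) (c := A5 / (A2 + A4))).
- by rewrite divr_ge0 // ltW.
- by rewrite divr_ge0 // ltW.
- by rewrite divr_ge0 // ltW.
- by have := radon 0%N isT; rewrite !expr0 !mulr1 -!mulrDl => <-; rewrite divff.
- move=> m; rewrite /lerp /moment_pt; have := radon m.+1 (ltn_ord m) => rm.
  transitivity ((A2 * t u2 ^+ m.+1 + A4 * t u4 ^+ m.+1) / (A2 + A4)); first by field.
  by rewrite rm; field.
Qed.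

Lemma barycentric_affine (S : {set 'I_N}) s : #|S| = 4%N -> s \in S ->
  exists lam : pt R -> R,
    (forall x y e, lam (lerp x y e) = lam x + e * (lam y - lam x)) /\
    forall (w : 'I_N -> R) x, (forall i, i \notin S -> w i = 0) -> \sum_i w i = 1 ->
      (forall k, x k = \sum_i w i * p i k) -> w s = lam x.
Proof.
move=> S4 sS; set r := [seq t i | i <- enum (S :\ s)].
have r3 : size r = 3%N.
  by rewrite size_map -cardE; move: S4; rewrite (cardsD1 s) sS => [[]].
pose pi := \prod_(c <- r) (t s - c).
have pi_nz : pi != 0.
  rewrite prodf_seq_neq0 all_map; apply/allP => i.
  rewrite mem_enum !inE => /andP[si _] /=.
  by rewrite subr_eq0 t_eq eq_sym.
exists (fun x => horner_pt (\prod_(c <- r) ('X - c%:P)) x / pi); split.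
  by move=> x y e; rewrite horner_pt_lerp; ring.
move=> w x wS w1 wx; rewrite -(sum_weights_root_poly _ w1 wx) ?r3 //.
rewrite (eq_bigr (fun i => (i == s)%:R * (w s * pi))) ?sum_delta ?mulfK // => i _.
case: (eqVneq i s) => [->|si]; first by rewrite mul1r.
case: (boolP (i \in S)) => iS; last by rewrite wS // !mul0r.
by rewrite prod_sub_root ?mulr0 ?mul0r // map_f // mem_enum !inE si.
Qed.

(* Two points of the ray in conv S give, by extrapolation, affine weights of x
   on S.  A negative one stays negative near x, since barycentric coordinates
   are affine, contradicting that the ray returns to conv S arbitrarily close
   to x. *)
Lemma conv_ray_closed (S : {set 'I_N}) (x y : pt R) : #|S| = 4%N ->
  (forall d, 0 < d -> exists2 e, 0 < e <= d & conv p S (lerp x y e)) ->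
  conv p S x.
Proof.
move=> S4 near.
have [e1 /andP[e1p _] [w1 [w1p w1S w1s w1x]]] := near 1 ltr01.
have [e2 /andP[e2p e2le] [w2 [w2p w2S w2s w2x]]] :=
  near (e1 / 2) (divr_gt0 e1p (ltr0Sn _ 1)).
have e12 : e1 - e2 != 0.
  by rewrite subr_eq0 gt_eqF // (le_lt_trans e2le) // ltr_pdivrMr // ltr_pMr // ltr1n.
pose w0 i := (e1 * w2 i - e2 * w1 i) / (e1 - e2).
have w0S i : i \notin S -> w0 i = 0.
  by move=> iS; rewrite /w0 w1S // w2S // !mulr0 subr0 mul0r.
have w0s : \sum_i w0 i = 1.
  by rewrite -mulr_suml sumrB -!mulr_sumr w1s w2s !mulr1 divff.
have w0x k : x k = \sum_i w0 i * p i k.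
  transitivity ((e1 * lerp x y e2 k - e2 * lerp x y e1 k) / (e1 - e2)).
    by rewrite /lerp; field.
  rewrite w1x w2x !mulr_sumr -sumrB mulr_suml; apply: eq_bigr => i _.
  by rewrite /w0; ring.
case: (boolP [forall i, 0 <= w0 i]) => [/forallP w0p|]; first by exists w0.
move=> /forallPn[s]; rewrite -ltNge => w0s_lt0.
have sS : s \in S by apply: contraLR w0s_lt0 => /w0S ->; rewrite ltxx.
have [lam [lam_lerp lam_w]] := barycentric_affine S4 sS.
have lam_x : w0 s = lam x := lam_w _ _ w0S w0s w0x.
set g := lam y - lam x.
have dp : 0 < - w0 s / (`|g| + 1) by rewrite divr_gt0 ?oppr_gt0 // ltr_wpDl.
have [e /andP[ep ele] [w [wp wS ws wx]]] := near _ dp.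
have : w s = w0 s + e * g by rewrite (lam_w _ _ wS ws wx) lam_lerp lam_x.
have : e * g < - w0 s.
  apply: (le_lt_trans (ler_wpM2l (ltW ep) (ler_norm g))).
  apply: (le_lt_trans (ler_wpM2r (normr_ge0 g) ele)).
  by rewrite mulrAC ltr_pdivrMr ?ltr_wpDl // ltr_pM2l ?oppr_gt0 // ltrDl.
have := wp s; lra.
Qed.

Lemma conv_push_between (S : {set 'I_N}) (a b c : 'I_N) e : (a <= b)%N ->
  (a < c < b)%N -> 0 < e -> conv p S (lerp (lerp (p a) (p b) 2^-1) (p c) e) ->
  exists2 k : 'I_N, (a < k < b)%N & k \in S.
Proof.
move=> ab a_c_b ep [w [w0 wS w1 wx]].
have neg : \sum_i w i * \prod_(u <- [:: t a; t b]) (t i - u) < 0.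
  rewrite (sum_weights_root_poly _ w1 wx) // !horner_pt_lerp !horner_pt_root_poly //.
  rewrite (prod_sub_root (x := t a)) ?mem_head // (prod_sub_root (x := t b)).
    rewrite subrr mulr0 addr0 add0r subr0 pmulr_rlt0 // !big_cons big_nil mulr1.
    by rewrite between_sign.
  by rewrite !inE eqxx orbT.
have [k wk_neg] := sum_lt0_witness neg.
have wk : w k != 0 by apply: contraTneq wk_neg => ->; rewrite mul0r ltxx.
have wk_pos : 0 < w k by rewrite lt_def wk w0.
exists k; last exact: weight_support wS wk.
by move: wk_neg; rewrite pmulr_rlt0 // !big_cons big_nil mulr1 between_sign.
Qed.

Section Triangulation.
Variable T : {set {set 'I_N}}.
Hypothesis T_triang : triangulation t T.

Lemma simplex_card S : S \in T -> #|S| = 4%N.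
Proof. by case: T_triang => card _ _; apply: card. Qed.

Lemma simplex_cover x : conv p [set: 'I_N] x -> exists2 S, S \in T & conv p S x.
Proof. by case: T_triang => _ cover _; move/cover. Qed.

Lemma simplex_segment S1 S2 (a c : 'I_N) e : S1 \in T -> S2 \in T ->
  a \in S1 -> c \in S1 -> 0 < e < 1 -> conv p S2 (lerp (p a) (p c) e) ->
  a \in S2 /\ c \in S2.
Proof.
move=> S1T S2T aS1 cS1 /andP[e0 e1] inS2.
have inS1 : conv p S1 (lerp (p a) (p c) e).
  by apply: conv_lerp; rewrite ?(ltW e0) ?(ltW e1).
case: T_triang => _ _ /(_ S1 S2 S1T S2T) [[al [be [below face]]] _].
have [_] := (face _).1 (conj inS1 inS2); rewrite dot_lerp => onH.
have vertex_on v : v \in S1 -> dot al (p v) = be -> v \in S2.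
  move=> vS1 ev; have vP := (conv_momentP _ _).2 vS1.
  by apply/conv_momentP; case: ((face _).2 (conj vP ev)).
have lea := below _ ((conv_momentP _ _).2 aS1).
have lec := below _ ((conv_momentP _ _).2 cS1).
by split; apply: vertex_on => //; nra.
Qed.

Lemma simplex_noninterlacing S1 S2 (a c x y z : 'I_N) : S1 \in T -> S2 \in T ->
  a \in S1 -> c \in S1 -> x \in S2 -> y \in S2 -> z \in S2 ->
  (x < a)%N -> (a < y)%N -> (y < c)%N -> (c < z)%N -> False.
Proof.
move=> S1T S2T aS1 cS1 xS2 yS2 zS2 xa ay yc cz.
have [e e01 inS2] := conv_interlace xa ay yc cz xS2 yS2 zS2.
have [aS2 cS2] := simplex_segment S1T S2T aS1 cS1 e01 inS2.
have uniq5 : uniq [:: x; a; y; c; z] by rewrite /= !inE -!val_eqE /=; lia.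
have : (#|[:: x; a; y; c; z]| <= #|S2|)%N.
  by apply/subset_leq_card/subsetP/allP; rewrite /= xS2 aS2 yS2 cS2 zS2.
by rewrite (card_uniqP uniq5) simplex_card.
Qed.

Lemma triangulation_X S1 S2 (a b c d : 'I_N) : S1 \in T -> S2 \in T ->
  a \in S1 -> c \in S1 -> b \in S2 -> d \in S2 ->
  (a < b)%N -> (b < c)%N -> (c < d)%N ->
  exists2 S, S \in T & a \in S /\ d \in S.
Proof.
move=> S1T S2T aS1 cS1 bS2 dS2 ab bc cd.
have [S ST midS] := simplex_cover (conv_midpoint a d).
case: (conv_midpoint_split (ltn_trans ab (ltn_trans bc cd)) midS) => [ad|].
  by exists S.
move=> [x [y [z [[xS yS zS] [xa ay yd dz]]]]]; exfalso.
case: (ltnP y c) => [yc|cy].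
- exact: (simplex_noninterlacing S1T ST aS1 cS1 xS yS zS xa ay yc (ltn_trans cd dz)).
- exact: (simplex_noninterlacing S2T ST bS2 dS2 xS yS zS (ltn_trans xa ab)
            (leq_trans bc cy) yd dz).
Qed.

Lemma triangulation_succ (i j : 'I_N) : val j = (val i).+1 ->
  exists2 S, S \in T & i \in S /\ j \in S.
Proof.
move=> ij; have lt_ij : (i < j)%N by rewrite ij.
have [S ST midS] := simplex_cover (conv_midpoint i j).
exists S => //; case: (conv_midpoint_split lt_ij midS) => //.
by move=> [x [y [z [_ [_ iy yj _]]]]]; move: iy yj ij => /=; lia.
Qed.

Lemma simplex_escapes S0 S (a b : 'I_N) (y : pt R) :
  S0 \in T -> S \in T -> a \in S0 -> b \in S0 -> ~ (a \in S /\ b \in S) ->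
  exists2 d, 0 < d &
    forall e, 0 < e <= d -> ~ conv p S (lerp (lerp (p a) (p b) 2^-1) y e).
Proof.
move=> S0T ST aS0 bS0 nab; apply: NNPP => near; apply: nab.
apply: (simplex_segment S0T ST aS0 bS0 (half_gt0_lt1 R)).
apply: (conv_ray_closed (y := y) (simplex_card ST)) => d dp.
apply: NNPP => far; apply: near; exists d => // e ed inS.
by apply: far; exists e.
Qed.

Lemma triangulation_bar S0 (a b : 'I_N) : S0 \in T -> a \in S0 -> b \in S0 ->
  (a.+1 < b)%N ->
  exists x : 'I_N,
    [/\ (a < x)%N, (x < b)%N & exists2 S, S \in T & [/\ a \in S, x \in S & b \in S]].
Proof.
move=> S0T aS0 bS0 ab; pose c := Ordinal (ltn_trans ab (ltn_ord b)).
pose q e := lerp (lerp (p a) (p b) 2^-1) (p c) e.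
have [d dp escape] : exists2 d, 0 < d & forall S, S \in enum T ->
    forall e, 0 < e <= d -> (a \in S /\ b \in S) \/ ~ conv p S (q e).
  apply: small_enough_seq => S; rewrite mem_enum => ST.
  case: (classic (a \in S /\ b \in S)) => [abS|nab]; first by exists 1 => // e _; left.
  have [d' d'p far] := simplex_escapes (p c) S0T ST aS0 bS0 nab.
  by exists d' => // e ed'; right; apply: far.
pose e := Num.min d 1.
have ep : 0 < e by rewrite lt_min dp ltr01.
have e1 : e <= 1 by rewrite ge_min lexx orbT.
have qe : conv p [set: 'I_N] (q e).
  apply: (conv3 (in_setT a) (in_setT b) (in_setT c)
            (a := (1 - e) * 2^-1) (b := (1 - e) * 2^-1) (c := e)).
  - by rewrite mulr_ge0 ?invr_ge0 ?subr_ge0.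
  - by rewrite mulr_ge0 ?invr_ge0 ?subr_ge0.
  - exact: ltW.
  - by field.
  - by move=> m; rewrite /q /lerp; field.
have a_c_b : (a < c < b)%N by rewrite /= ltnSn.
have [S ST inS] := simplex_cover qe.
have [[aS bS]|//] : (a \in S /\ b \in S) \/ ~ conv p S (q e).
  by apply: escape; rewrite ?mem_enum // ep ge_min lexx.
have [k a_k_b kS] := conv_push_between (ltnW (ltnW ab)) a_c_b ep inS.
by exists k; case/andP: a_k_b => ak kb; split => //; exists S.
Qed.

End Triangulation.

End MomentCurve.

Lemma Gamma_of_simplex n (T : {set {set 'I_n.+2}}) S (i j : 'I_n.+2) :
  S \in T -> i \in S -> j \in S -> (0 < val i <= n)%N -> (0 < val j <= n)%N ->
  val i != val j -> Gamma T (val i) (val j).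
Proof. by move=> ST iS jS hi hj /eqP ij; split => //; exists S => //; exists i, j. Qed.

Unset Implicit Arguments.
Local Close Scope ring_scope.

Theorem lemma7 (R : realType) (n : nat) (t : 'I_(n.+2) -> R)
  (T : {set {set 'I_(n.+2)}}) :
  (2 <= n)%N ->
  (forall i j : 'I_(n.+2), (i < j)%N -> (t i < t j)%R) ->
  triangulation t T ->
  persistent n (Gamma T).
Proof.
move=> _ t_mono T_triang; split.
- move=> i i0 lt_in.
  have [vi vj] : val (inord i : 'I_n.+2) = i /\ val (inord i.+1 : 'I_n.+2) = i.+1.
    by rewrite /= !inordK //; lia.
  have [S ST [iS jS]] : exists2 S, S \in T & inord i \in S /\ inord i.+1 \in S.
    by apply: (triangulation_succ t_mono T_triang); rewrite vi vj.
  rewrite -[in Gamma _ i]vi -vj.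
  by apply: (Gamma_of_simplex ST iS jS); rewrite ?vi ?vj; lia.
- move=> a b c d a0 ab bc cd dn [_ _ _ [S1 S1T [a' [c' [ea ec aS1 cS1]]]]].
  move=> [_ _ _ [S2 S2T [b' [d' [eb ed bS2 dS2]]]]]; subst.
  have [S ST [aS dS]] := triangulation_X t_mono T_triang S1T S2T aS1 cS1 bS2 dS2 ab bc cd.
  by apply: (Gamma_of_simplex ST aS dS); lia.
- move=> a b a0 ab bn [_ _ _ [S0 S0T [a' [b' [ea eb aS0 bS0]]]]]; subst.
  have [x [ax xb [S ST [aS xS bS]]]] := triangulation_bar t_mono T_triang S0T aS0 bS0 ab.
  exists x; split => //.
  all: by apply: (Gamma_of_simplex ST) => //; move: a0 ab bn ax xb => /=; lia.
Qed.
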